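(* Let $S$ be a finite set and $\mu\colon\mathscr P(S)\to\mathbf Z$ a submodular, non-decreasing function on its power set. Let $P_\mu=\{\mathbf x\in\mathbf R^S\mid \mathbf x\ge\mathbf 0,\ \mathbf x\cdot\mathbf i_U\le\mu(U)\text{ for all }U\subset S\}$ and $B_\mu=\{\mathbf x\in P_\mu\mid \mathbf x\cdot\mathbf i_S=\mu(S)\}$. Write $I_\mu(\xi)=\sum_{j=0}^{|S|-1}a_j\xi^j$ and $X_\mu(\eta)=\sum_{j=0}^{|S|-1}b_j\eta^j$. Then for every non-negative integer $k$, \[\bigl|(B_\mu+k\nabla_S)\cap\mathbf Z^S\bigr|=\sum_{j=0}^{|S|-1}a_j\binom{k+|S|-1-j}{|S|-1-j},\qquad \bigl|(B_\mu+k\Delta_S)\cap\mathbf Z^S\bigr|=\sum_{j=0}^{|S|-1}b_j\binom{k+|S|-1-j}{|S|-1-j}.\]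
   Context: $\mathbf i_U\in\mathbf R^S$ denotes the indicator vector of $U\subset S$; $+$ between sets is Minkowski sum. $\Delta_S=\operatorname{conv}\{\mathbf i_{\{s\}}\mid s\in S\}$ is the standard simplex and $\nabla_S=-\Delta_S=\operatorname{conv}\{-\mathbf i_{\{s\}}\mid s\in S\}$ the inverted simplex. The bases of $\mu$ are the integer points of $B_\mu$. Fix a linear order on $S$. For a basis $\mathbf f$, an element $s\in S$ is internally active if there is no $s'<s$ such that $\mathbf f-\mathbf i_{\{s\}}+\mathbf i_{\{s'\}}$ is a basis, and externally active if there is no $s'<s$ such that $\mathbf f+\mathbf i_{\{s\}}-\mathbf i_{\{s'\}}$ is a basis. Let $\bar\iota(\mathbf f)$, resp. $\bar\epsilon(\mathbf f)$, be $|S|$ minus the number of internally, resp. externally, active elements. The interior and exterior polynomials are $I_\mu(\xi)=\sum_{\mathbf f}\xi^{\bar\iota(\mathbf f)}$ and $X_\mu(\eta)=\sum_{\mathbf f}\eta^{\bar\epsilon(\mathbf f)}$, summed over all bases $\mathbf f$ (their degrees are at most $|S|-1$). *)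

From mathcomp Require Import all_boot all_order all_algebra.
From mathcomp Require Import reals.
Set Implicit Arguments. Unset Strict Implicit. Unset Printing Implicit Defensive.
Import Order.TTheory GRing.Theory Num.Theory.
Local Open Scope ring_scope.

Section Defs.
Variable S : finType.

Definition submodular (mu : {set S} -> int) : Prop :=
  forall A B : {set S}, mu (A :|: B) + mu (A :&: B) <= mu A + mu B.

Definition mu_nondecreasing (mu : {set S} -> int) : Prop :=
  forall A B : {set S}, A \subset B -> mu A <= mu B.

Definition is_base (mu : {set S} -> int) (f : {ffun S -> int}) : bool :=
  [forall s, 0 <= f s] &&
  [forall U : {set S}, \sum_(s in U) f s <= mu U] &&
  (\sum_(s : S) f s == mu setT).

Definition exch (f : {ffun S -> int}) (s s' : S) : {ffun S -> int} :=
  [ffun t => f t - (t == s)%:Z + (t == s')%:Z].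

(* the linear order on S is  s' < s  iff  r s' < r s, with r injective *)
Definition int_active (r : S -> nat) (mu : {set S} -> int) (f : {ffun S -> int}) (s : S) : bool :=
  ~~ [exists s', (r s' < r s)%N && is_base mu (exch f s s')].

Definition ext_active (r : S -> nat) (mu : {set S} -> int) (f : {ffun S -> int}) (s : S) : bool :=
  ~~ [exists s', (r s' < r s)%N && is_base mu (exch f s' s)].

Definition iota_bar r mu f : nat := (#|S| - #|[set s | int_active r mu f s]|)%N.
Definition eps_bar r mu f : nat := (#|S| - #|[set s | ext_active r mu f s]|)%N.

(* Every basis f satisfies 0 <= f s <= mu [set s], so bases are exactly the
   images of the following finite candidate functions that are bases. *)
Definition bbound (mu : {set S} -> int) : nat := \max_(s : S) `|mu [set s]|%N.
Definition toZ (N : nat) (g : {ffun S -> 'I_N.+1}) : {ffun S -> int} :=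
  [ffun s => ((g s : nat) : int)].

(* a_j : coefficient of xi^j in I_mu ; b_j : coefficient of eta^j in X_mu *)
Definition interior_coef r mu (j : nat) : nat :=
  #|[set g : {ffun S -> 'I_(bbound mu).+1} |
      is_base mu (toZ g) && (iota_bar r mu (toZ g) == j)]|.
Definition exterior_coef r mu (j : nat) : nat :=
  #|[set g : {ffun S -> 'I_(bbound mu).+1} |
      is_base mu (toZ g) && (eps_bar r mu (toZ g) == j)]|.

Variable R : realType.

Definition in_Bmu (mu : {set S} -> int) (x : {ffun S -> R}) : Prop :=
  (forall s, 0 <= x s) /\
  (forall U : {set S}, \sum_(s in U) x s <= (mu U)%:~R) /\
  \sum_(s : S) x s = (mu setT)%:~R.

Definition in_Delta (d : {ffun S -> R}) : Prop :=
  (forall s, 0 <= d s) /\ \sum_(s : S) d s = 1.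
Definition in_Nabla (d : {ffun S -> R}) : Prop :=
  in_Delta [ffun s => - d s].

Definition in_mink (mu : {set S} -> int) (Q : {ffun S -> R} -> Prop) (k : nat)
  (x : {ffun S -> int}) : Prop :=
  exists b d : {ffun S -> R}, in_Bmu mu b /\ Q d /\
    forall s, (x s)%:~R = b s + k%:R * d s.

End Defs.

(* An integer point x of B_mu + k nabla_S lies below some basis f with
   sum (f - x) = k, and an integer point of B_mu + k Delta_S lies above some
   basis f with sum (x - f) = k: a real base b inside an integral box can be
   replaced by an integral one, by greedy augmentation of an independent vector.
   Bases form an exchange-closed set, so among the bases above x there is
   exactly one, f_x, such that x < f_x only at internally active elements of
   f_x: exchanging a unit from an inactive element to a smaller one lowers the
   rank-weighted sum, and two such bases coincide because at the smallest
   element where they differ the exchange property produces a smaller one.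
   Thus x |-> (f_x, f_x - x) is a bijection onto the pairs of a basis f and a
   composition of k supported on the internally active elements of f, of which
   there are C(k + a - 1, a - 1) when f has a active elements. Externally
   active elements of f are the internally active elements of -f in the set of
   negated bases, which is again exchange closed; this gives the Delta case. *)

From mathcomp Require Import all_boot all_order all_algebra.
From mathcomp Require Import reals zify.
Set Implicit Arguments. Unset Strict Implicit. Unset Printing Implicit Defensive.
Import Order.TTheory GRing.Theory Num.Theory.
Local Open Scope ring_scope.

Section FinsetSums.
Variables (S : finType) (V : nmodType).
Implicit Types (A B T : {set S}).

Lemma sum_setT (F : S -> V) : \sum_(s in [set: S]) F s = \sum_s F s.
Proof. by apply: eq_bigl => s; rewrite inE. Qed.

Lemma sum_setC (F : S -> V) T :
  \sum_s F s = \sum_(s in T) F s + \sum_(s in ~: T) F s.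
Proof. by rewrite -sum_setT (big_setID T) setTI setTD. Qed.

Lemma sum_setUI (F : S -> V) A B :
  \sum_(s in A :|: B) F s + \sum_(s in A :&: B) F s =
  \sum_(s in A) F s + \sum_(s in B) F s.
Proof.
rewrite [\sum_(s in A :|: B) _](big_setID A) [\sum_(s in B) _](big_setID A) /=.
by rewrite setUK setDUl setDv set0U (setIC B A) addrAC addrA.
Qed.

End FinsetSums.

Section Exchange.
Variable S : finType.
Implicit Types (f : {ffun S -> int}) (U : {set S}).

Lemma sum_indicator U (a : S) : \sum_(t in U) (t == a)%:Z = (a \in U)%:Z.
Proof.
case: (boolP (a \in U)) => aU.
  by rewrite (bigD1 a) //= eqxx big1 ?addr0 // => t /andP[_ /negbTE ->].
by rewrite big1 // => t; case: eqP => // ->; rewrite (negbTE aU).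
Qed.

Lemma sum_exch f a b U :
  \sum_(s in U) exch f a b s = \sum_(s in U) f s - (a \in U)%:Z + (b \in U)%:Z.
Proof.
rewrite -!sum_indicator -sumrB -big_split /=.
by apply: eq_bigr => s _; rewrite ffunE.
Qed.

Lemma sum_exchT f a b : \sum_s exch f a b s = \sum_s f s.
Proof. by rewrite -!sum_setT sum_exch !inE subrK. Qed.

Lemma opp_exch f a b : - exch f a b = exch (- f) b a.
Proof. by apply/ffunP => t; rewrite !ffunE /=; lia. Qed.
End Exchange.

Section ActiveElements.
Variables (S : finType) (r : S -> nat) (P : pred {ffun S -> int}).
Hypothesis r_inj : injective r.
Implicit Types f g x : {ffun S -> int}.

Definition exchange_closed := forall f g s, P f -> P g -> f s < g s ->
  exists2 t, g t < f t & P (exch f t s).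

Definition active f s := ~~ [exists s', (r s' < r s)%N && P (exch f s s')].

Definition active_above x f :=
  [/\ P f, forall s, x s <= f s & forall s, x s < f s -> active f s].

Definition rank_weight f : int := \sum_s f s * (r s)%:Z.

Lemma rank_weight_exch f a b : rank_weight (exch f a b) = rank_weight f - (r a)%:Z + (r b)%:Z.
Proof.
have sum_at c : \sum_s (s == c)%:Z * (r s)%:Z = (r c)%:Z.
  by rewrite (bigD1 c) //= eqxx mul1r big1 ?addr0 // => s /negbTE ->; rewrite mul0r.
rewrite /rank_weight -[in RHS]sum_at -[X in _ + X]sum_at -sumrB -big_split /=.
by apply: eq_bigr => s _; rewrite ffunE mulrDl mulrBl.
Qed.

Lemma rank_weight_le f g : (forall s, f s <= g s) -> rank_weight f <= rank_weight g.
Proof. by move=> fg; apply: ler_sum => s _; apply: ler_wpM2r. Qed.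

Lemma exists_active_above x f : P f -> (forall s, x s <= f s) ->
  exists2 g, active_above x g & \sum_s g s = \sum_s f s.
Proof.
have [n] := ubnP (absz (rank_weight f - rank_weight x)).
elim: n f => // n IH f weight_lt Pf xf.
case: (boolP [forall s, (x s < f s) ==> active f s]) => [/forallP f_act|].
  by exists f => //; split=> // s /(implyP (f_act s)).
case/forallPn => s; rewrite negb_imply negbK => /andP[xs /existsP[s' /andP[rs' Pe]]].
have xe t : x t <= exch f s s' t.
  by rewrite ffunE; have := xf t; case: eqP => [->|_]; case: eqP => [->|_]; lia.
have [|g Ag gS] := IH (exch f s s') _ Pe xe; last by exists g; rewrite // gS sum_exchT.
by have := rank_weight_le xe; rewrite rank_weight_exch; lia.
Qed.

Definition active_set f := [set s | active f s].

Lemma active_set_neq0 (s0 : S) f : active_set f != set0.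
Proof.
apply/set0Pn; exists [arg min_(s < s0) r s]; rewrite inE.
case: arg_minnP => // s _ s_min; apply/existsPn => s'.
by rewrite ltnNge s_min.
Qed.

Lemma active_above_descent x f g s : exchange_closed ->
  active_above x f -> P g -> (forall t, x t <= g t) -> f s < g s ->
  exists2 t, (r t < r s)%N & g t < f t.
Proof.
move=> exP [Pf xf f_act] Pg xg fg; have [t gf Pe] := exP _ _ _ Pf Pg fg.
exists t => //; have /f_act : x t < f t by apply: le_lt_trans (xg t) gf.
case/existsPn/(_ s)/nandP => [|/negP//]; rewrite -leqNgt leq_eqVlt.
case/orP=> [/eqP/r_inj ets|//]; by move: gf fg; rewrite ets; lia.
Qed.

Lemma active_above_unique x f g : exchange_closed ->
  active_above x f -> active_above x g -> f = g.
Proof.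
move=> exP Af Ag; have [Pf xf _] := Af; have [Pg xg _] := Ag.
apply/ffunP => s; have [n] := ubnP (r s); elim: n s => // n IH s /ltnSE rs.
case: (ltgtP (f s) (g s)) => // [fg|gf].
  have [t rt] := active_above_descent exP Af Pg xg fg.
  by rewrite IH ?ltxx // (leq_trans rt).
have [t rt] := active_above_descent exP Ag Pf xf gf.
by rewrite IH ?ltxx // (leq_trans rt).
Qed.
End ActiveElements.

Section Bases.
Variables (S : finType) (mu : {set S} -> int).
Hypothesis mu_sub : submodular mu.
Implicit Types (f g y : {ffun S -> int}) (A B U T : {set S}).

Definition mu_bounded y := forall U, \sum_(s in U) y s <= mu U.

Lemma is_baseP f : reflect [/\ forall s, 0 <= f s, mu_bounded f & \sum_s f s = mu setT]
  (is_base mu f).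
Proof.
apply: (iffP idP) => [/andP[/andP[/forallP f0 /forallP fU] /eqP fS] //|[f0 fU fS]].
by rewrite /is_base fS eqxx andbT; apply/andP; split; apply/forallP.
Qed.

Definition tight y U := \sum_(s in U) y s == mu U.

Lemma tight_setUI y A B : mu_bounded y -> tight y A -> tight y B ->
  tight y (A :|: B) && tight y (A :&: B).
Proof.
move=> yU /eqP yA /eqP yB; have := sum_setUI y A B; rewrite yA yB.
(* [lia] would read convertible but syntactically different copies of a sum
   as distinct atoms; [set] merges them first. *)
have := mu_sub A B; have := yU (A :|: B); have := yU (A :&: B).
set u := \sum_(s in A :|: B) y s; set i := \sum_(s in A :&: B) y s.
by move=> hi hu hsub e; rewrite /tight -/u -/i; apply/andP; split; apply/eqP; lia.
Qed.

Lemma tight_bigcap y (F : pred {set S}) : mu_bounded y -> tight y setT ->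
  (forall U, F U -> tight y U) -> tight y (\bigcap_(U | F U) U).
Proof.
move=> yU yT FT; apply: (big_ind (tight y)) => // A B tA tB.
by case/andP: (tight_setUI yU tA tB).
Qed.

Lemma tight_bigcup y (F : pred {set S}) : mu_bounded y ->
  (forall U, F U -> tight y U) ->
  \bigcup_(U | F U) U = set0 \/ tight y (\bigcup_(U | F U) U).
Proof.
move=> yU FT; have: (\bigcup_(U | F U) U == set0) || tight y (\bigcup_(U | F U) U).
  apply: (big_ind (fun T => (T == set0) || tight y T)) => [|A B|U /FT ->]; rewrite ?eqxx ?orbT //.
  case/orP=> [/eqP->|tA]; first by rewrite set0U.
  case/orP=> [/eqP->|tB]; first by rewrite setU0 tA orbT.
  by case/andP: (tight_setUI yU tA tB) => ->; rewrite orbT.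
by case/orP=> [/eqP|]; [left|right].
Qed.

Lemma exch_base f a b : is_base mu f -> 0 < f a ->
  (forall U, b \in U -> a \notin U -> ~~ tight f U) -> is_base mu (exch f a b).
Proof.
move=> /is_baseP[f0 fU fS] fa loose; apply/is_baseP; split.
- move=> u; rewrite ffunE; have := f0 u; case: eqP => [->|_]; case: eqP => _; lia.
- move=> U; rewrite sum_exch; have := fU U; set fU_sum := \sum_(s in U) f s.
  case bU: (b \in U); case aU: (a \in U) => //=; try lia.
  by move: (loose U bU (negbT aU)); rewrite /tight -/fU_sum; lia.
- by rewrite -sum_setT sum_exch !inE sum_setT fS; lia.
Qed.

Lemma base_exchange : exchange_closed (is_base mu).
Proof.
move=> f g s bf bg fg; have [f0 fU fS] := is_baseP _ bf; have [g0 gU _] := is_baseP _ bg.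
pose T := \bigcap_(U | tight f U && (s \in U)) U.
have sT : s \in T by apply/bigcapP => U /andP[].
have /eqP fT : tight f T.
  by apply: tight_bigcap => // [|U /andP[]//]; rewrite /tight sum_setT fS.
have [t /and3P[tT _ gf] | no_t] := pickP [pred t | [&& t \in T, t != s & g t < f t]].
  exists t => //; apply: exch_base => // [|U sU]; first exact: le_lt_trans (g0 t) gf.
  apply: contra => tU; have : T \subset U by apply: bigcap_inf; rewrite tU sU.
  by move/subsetP/(_ t tT).
have : \sum_(u in T) f u < \sum_(u in T) g u.
  rewrite (bigD1 s sT) [X in _ < X](bigD1 s sT) /=; apply: ltr_leD => //.
  apply: ler_sum => u /andP[uT us]; rewrite leNgt; apply: contraFN (no_t u) => gf.
  by apply/and3P; split.
by rewrite fT ltNge gU.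
Qed.

Lemma base_exchange_down f g s : is_base mu f -> is_base mu g -> g s < f s ->
  exists2 t, f t < g t & is_base mu (exch f s t).
Proof.
move=> bf bg gf; have [f0 fU fS] := is_baseP _ bf; have [g0 gU gS] := is_baseP _ bg.
pose T := \bigcup_(U | tight f U && (s \notin U)) U.
have sT : s \notin T by apply/bigcupP => -[U /andP[_ /negP]].
have gfT : \sum_(u in T) g u <= \sum_(u in T) f u.
  have FT U : tight f U && (s \notin U) -> tight f U by case/andP.
  have [T0|/eqP fT] := tight_bigcup (F := fun U => tight f U && (s \notin U)) fU FT.
    by rewrite /T T0 !big_set0.
  by rewrite fT gU.
have [t /andP[tT fg] | no_t] := pickP [pred t | (t \notin T) && (f t < g t)].
  exists t => //; apply: exch_base => // [|U tU sU]; first exact: le_lt_trans (g0 s) gf.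
  apply/negP => fU'; have : U \subset T by apply: bigcup_sup; rewrite fU' sU.
  by move/subsetP/(_ t tU); rewrite (negbTE tT).
have : \sum_(u in ~: T) g u < \sum_(u in ~: T) f u.
  have sT' : s \in ~: T by rewrite inE.
  rewrite (bigD1 s sT') [X in _ < X](bigD1 s sT') /=; apply: ltr_leD => //.
  apply: ler_sum => u /andP[uT _]; rewrite leNgt; apply: contraFN (no_t u) => fg.
  by apply/andP; split; rewrite -?in_setC.
move: gfT; have := sum_setC f T; have := sum_setC g T; rewrite fS gS.
set gT := \sum_(s in T) g s; set fT := \sum_(s in T) f s.
set gC := \sum_(s in ~: T) g s; set fC := \sum_(s in ~: T) f s; lia.
Qed.

Lemma base_exchange_opp : exchange_closed (fun f => is_base mu (- f)).
Proof.
move=> f g s bf bg fg; have gf : (- g) s < (- f) s by rewrite !ffunE ltrN2.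
have [t fg' be] := base_exchange_down bf bg gf.
by exists t; [move: fg'; rewrite !ffunE ltrN2 | rewrite opp_exch].
Qed.
End Bases.

Section Augmentation.
Variables (S : finType) (mu : {set S} -> int) (c : {ffun S -> int}).
Hypothesis mu_sub : submodular mu.
Hypothesis c_cover : forall T : {set S}, mu setT <= mu T + \sum_(s in ~: T) c s.
Hypothesis c_total : mu setT <= \sum_s c s.
Implicit Types (y : {ffun S -> int}) (s : S) (U : {set S}).

Lemma bump_mu_bounded y s : mu_bounded mu y ->
  ~~ [exists U : {set S}, (s \in U) && tight mu y U] ->
  mu_bounded mu [ffun t => y t + (t == s)%:Z].
Proof.
move=> yU /existsPn loose U; under eq_bigr do rewrite ffunE.
rewrite big_split /= sum_indicator.
have := yU U; have := loose U; rewrite /tight; set yU_sum := \sum_(t in U) y t.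
by case: (s \in U) => /=; lia.
Qed.

Lemma tight_cover_sum y : mu_bounded mu y -> (forall s, y s <= c s) ->
  (forall s, y s < c s -> [exists U : {set S}, (s \in U) && tight mu y U]) ->
  mu setT <= \sum_s y s.
Proof.
move=> yU yc cover; pose T := \bigcup_(U | tight mu y U) U.
have yc_out s : s \notin T -> y s = c s.
  move=> sT; apply: le_anti; rewrite yc /= leNgt; apply: contra sT => /cover.
  by case/existsP=> U /andP[sU tU]; apply/bigcupP; exists U.
have sum_out : \sum_(s in ~: T) y s = \sum_(s in ~: T) c s.
  by apply: eq_bigr => s; rewrite inE => /yc_out.
have [T0|/eqP yT] := tight_bigcup (F := tight mu y) mu_sub yU (fun _ => id).
  by move: sum_out; rewrite /T T0 setC0 !sum_setT => ->.
by rewrite (sum_setC _ T) yT sum_out.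
Qed.

Lemma exists_base_between y : (forall s, 0 <= y s <= c s) -> mu_bounded mu y ->
  exists2 f, is_base mu f & forall s, y s <= f s <= c s.
Proof.
have [n] := ubnP (absz (mu setT - \sum_s y s)%R).
elim: n y => // n IH y deficiency_lt yc yU.
have [y0 ycs] : (forall s, 0 <= y s) /\ (forall s, y s <= c s).
  by split=> s; case/andP: (yc s).
have ySle : \sum_s y s <= mu setT by rewrite -sum_setT yU.
case: (boolP (mu setT <= \sum_s y s)) => [ySge|].
  exists y => [|s]; last by rewrite lexx ycs.
  by apply/is_baseP; split=> //; apply: le_anti; rewrite ySle.
rewrite -ltNge => ySlt.
have [s /andP[ys no_tight]|all_tight] :=
  pickP [pred s | (y s < c s) && ~~ [exists U : {set S}, (s \in U) && tight mu y U]].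
  pose y' := [ffun t => y t + (t == s)%:Z].
  have [f bf y'f] : exists2 f, is_base mu f & forall t, y' t <= f t <= c t.
    apply: IH; last exact: bump_mu_bounded.
    - under eq_bigr do rewrite ffunE.
      rewrite big_split /= -(sum_setT (fun t => (t == s)%:Z)) sum_indicator inE.
      by move: deficiency_lt ySlt; set ySum := \sum_t y t; lia.
    - by move=> t; rewrite ffunE; have := y0 t; have := ycs t; case: eqP => [->|_]; lia.
  by exists f => // t; have := y'f t; rewrite ffunE; lia.
have cover s : y s < c s -> [exists U : {set S}, (s \in U) && tight mu y U].
  by move=> ys; have := all_tight s; rewrite /= ys /= => /negbFE.
by have := tight_cover_sum yU ycs cover; rewrite leNgt ySlt.
Qed.
End Augmentation.

Section RealPoints.
Variables (R : realType) (S : finType) (mu : {set S} -> int).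
Hypothesis mu_sub : submodular mu.
Implicit Types (b d : {ffun S -> R}) (f x : {ffun S -> int}).

Lemma intr_sum (P : pred S) (F : S -> int) :
  ((\sum_(s | P s) F s)%:~R : R) = \sum_(s | P s) (F s)%:~R.
Proof. exact: raddf_sum. Qed.

Lemma base_in_box b (l u : {ffun S -> int}) : in_Bmu mu b ->
  (forall s, (l s)%:~R <= b s <= (u s)%:~R) ->
  exists2 f, is_base mu f & forall s, l s <= f s <= u s.
Proof.
move=> [b0 [bU bS]] lbu.
have [lb bu] : (forall s, (l s)%:~R <= b s) /\ (forall s, b s <= (u s)%:~R).
  by split=> s; case/andP: (lbu s).
pose y := [ffun s => if 0 <= l s then l s else 0].
have yb s : (y s)%:~R <= b s by rewrite ffunE; case: ifP => _; [exact: lb | exact: b0].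
have u_cover T : mu setT <= mu T + \sum_(s in ~: T) u s.
  rewrite -(ler_int R) intrD intr_sum -bS (sum_setC b T).
  by apply: lerD; [exact: bU | apply: ler_sum => s _; exact: bu].
have u_total : mu setT <= \sum_s u s.
  rewrite -(ler_int R) intr_sum -bS.
  by apply: ler_sum => s _; exact: bu.
have y_range s : 0 <= y s <= u s.
  apply/andP; split; first by rewrite ffunE; case: ifP.
  by rewrite -(ler_int R) (le_trans (yb s) (bu s)).
have y_bounded : mu_bounded mu y.
  move=> U; rewrite -(ler_int R) intr_sum; apply: le_trans (bU U).
  by apply: ler_sum => s _; exact: yb.
have [f bf yfu] := exists_base_between mu_sub u_cover u_total y_range y_bounded.
exists f => // s; have := yfu s; rewrite ffunE; case: ifP; lia.
Qed.

Lemma base_real f : is_base mu f -> in_Bmu mu [ffun s => ((f s)%:~R : R)].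
Proof.
case/is_baseP=> f0 fU fS; split; [|split].
- by move=> s; rewrite ffunE ler0z.
- by move=> U; under eq_bigr do rewrite ffunE; rewrite -intr_sum ler_int.
- by under eq_bigr do rewrite ffunE; rewrite -intr_sum fS.
Qed.

Lemma scaled_simplex (s0 : S) (k : nat) (c : {ffun S -> int}) :
  (forall s, 0 <= c s) -> \sum_s c s = k%:Z ->
  exists2 d : {ffun S -> R}, in_Delta d & forall s, (c s)%:~R = k%:R * d s.
Proof.
move=> c0; case: k => [|k] cS.
  have c_zero s : c s = 0 by apply: (psumr_eq0P (P := predT)) => // t _.
  exists [ffun s => (s == s0)%:R] => [|s]; last by rewrite c_zero mul0r.
  split=> [s|]; first by rewrite ffunE.
  under eq_bigr do rewrite ffunE.
  by rewrite (bigD1 s0) //= eqxx big1 ?addr0 // => s /negbTE ->.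
have k0 : k.+1%:R != 0 :> R by rewrite pnatr_eq0.
exists [ffun s => (c s)%:~R / k.+1%:R] => [|s]; last by rewrite ffunE mulrC divfK.
split=> [s|]; first by rewrite ffunE divr_ge0 ?ler0z.
under eq_bigr do rewrite ffunE.
by rewrite -mulr_suml -intr_sum cS divff.
Qed.

Lemma sum_add_scaled b d (k : nat) :
  \sum_s (b s + k%:R * d s) = \sum_s b s + k%:R * \sum_s d s.
Proof. by rewrite big_split mulr_sumr. Qed.

Lemma mink_nablaP (s0 : S) (k : nat) x : in_mink mu (@in_Nabla S R) k x <->
  exists f, [/\ is_base mu f, forall s, x s <= f s & \sum_s (f s - x s) = k%:Z].
Proof.
split=> [[b [d [bB [[d0 dS] xbd]]]]|[f [bf xf fxS]]].
  have [b0 [bU bS]] := bB.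
  have xb s : (x s)%:~R <= b s.
    by rewrite xbd gerDl mulr_ge0_le0 //; have := d0 s; rewrite ffunE oppr_ge0.
  have xb_box s : (x s)%:~R <= b s <= (([ffun t => mu [set t]] : {ffun S -> int}) s)%:~R.
    by rewrite xb ffunE /=; have := bU [set s]; rewrite big_set1.
  have [f bf xf] := base_in_box bB xb_box.
  exists f; split=> [//|s|]; first by case/andP: (xf s).
  have dS' : \sum_s d s = -1.
    apply: oppr_inj; rewrite opprK -dS -sumrN.
    by apply: eq_bigr => s _; rewrite ffunE.
  have xS : \sum_s ((x s)%:~R : R) = (mu setT)%:~R - k%:R.
    by under eq_bigr do rewrite xbd; rewrite sum_add_scaled dS' mulrN1 -bS.
  apply: (@intr_inj R); case/is_baseP: bf => _ _ fS.
  by rewrite sumrB fS intrB intr_sum xS opprB addrC subrK.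
have c0 s : 0 <= [ffun s => f s - x s] s by rewrite ffunE subr_ge0.
have cS : \sum_s [ffun s => f s - x s] s = k.
  by rewrite -fxS; apply: eq_bigr => s _; rewrite ffunE.
have [d dD cd] := scaled_simplex s0 c0 cS.
exists [ffun s => (f s)%:~R], [ffun s => - d s]; split; first exact: base_real.
split; last by move=> s; rewrite !ffunE mulrN -cd ffunE intrB opprB addrC subrK.
rewrite /in_Nabla; suff -> : [ffun s => - [ffun s => - d s] s] = d by [].
by apply/ffunP => s; rewrite !ffunE opprK.
Qed.

Lemma mink_deltaP (s0 : S) (k : nat) x : in_mink mu (@in_Delta S R) k x <->
  exists f, [/\ is_base mu f, forall s, f s <= x s & \sum_s (x s - f s) = k%:Z].
Proof.
split=> [[b [d [bB [[d0 dS] xbd]]]]|[f [bf fx xfS]]].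
  have [b0 [bU bS]] := bB.
  have bx_box s : ((0 : {ffun S -> int}) s)%:~R <= b s <= (x s)%:~R.
    by rewrite ffunE b0 xbd lerDl mulr_ge0.
  have [f bf fx] := base_in_box bB bx_box.
  exists f; split=> [//|s|]; first by case/andP: (fx s).
  have xS : \sum_s ((x s)%:~R : R) = (mu setT)%:~R + k%:R.
    by under eq_bigr do rewrite xbd; rewrite sum_add_scaled dS mulr1 -bS.
  apply: (@intr_inj R); case/is_baseP: bf => _ _ fS.
  by rewrite sumrB fS intrB intr_sum xS addrC addKr.
have c0 s : 0 <= [ffun s => x s - f s] s by rewrite ffunE subr_ge0.
have cS : \sum_s [ffun s => x s - f s] s = k.
  by rewrite -xfS; apply: eq_bigr => s _; rewrite ffunE.
have [d dD cd] := scaled_simplex s0 c0 cS.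
exists [ffun s => (f s)%:~R], d; split; first exact: base_real.
split=> // s; rewrite !ffunE -cd ffunE intrB.
by rewrite addrC subrK.
Qed.
End RealPoints.

Lemma map_nth_index (A B : eqType) (b0 : B) (s : seq A) (w : seq B) :
  uniq s -> size w = size s -> [seq nth b0 w (index a s) | a <- s] = w.
Proof.
move=> s_uniq sw; apply: (@eq_from_nth _ b0); first by rewrite size_map sw.
rewrite size_map => i lt_i; have a0 : A by case: s lt_i {s_uniq sw} => // a.
by rewrite (nth_map a0) // index_uniq.
Qed.

Section Compositions.
Local Open Scope nat_scope.
Variables (T : finType) (k : nat).
Implicit Types (D : {set T}) (c : {ffun T -> 'I_k.+1}).

Definition composition D c :=
  [forall t, (t \notin D) ==> (c t == ord0)] && (\sum_t c t == k).

Lemma card_tuple_compositions n : 0 < n ->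
  #|[set w : n.-tuple 'I_k.+1 | \sum_(i <- w) i == k]| = 'C(k + n.-1, n.-1).
Proof. by case: n => // m _; rewrite card_ord_partitions addnC. Qed.

Lemma sum_supported D c : (forall t, t \notin D -> c t = ord0) ->
  \sum_(i <- map c (enum D)) i = \sum_t c t.
Proof.
move=> c_out; rewrite big_map big_enum [RHS](bigID [in D]) /= [X in _ + X]big1 ?addn0 //.
by move=> t /c_out ->.
Qed.

Lemma card_compositions D : D != set0 ->
  #|[set c | composition D c]| = 'C(k + #|D|.-1, #|D|.-1).
Proof.
move=> D0; rewrite -card_tuple_compositions ?card_gt0 //.
pose graph c := map_tuple c (enum_tuple D).
rewrite -(@card_in_imset _ _ graph); last first.
  move=> c1 c2; rewrite !inE => /andP[/forallP c1D _] /andP[/forallP c2D _] /(congr1 val) /=.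
  move/eq_in_map => e; apply/ffunP => t; case: (boolP (t \in D)) => tD.
    by apply: e; rewrite mem_enum.
  by rewrite (eqP (implyP (c1D t) tD)) (eqP (implyP (c2D t) tD)).
apply: eq_card => w; rewrite inE; apply/imsetP/idP.
  case=> c; rewrite inE => /andP[/forallP cD /eqP cS] ->.
  by rewrite sum_supported ?cS // => t tD; apply/eqP/(implyP (cD t)).
move=> wS; pose c := [ffun t => nth ord0 w (index t (enum D))].
have c_out t : t \notin D -> c t = ord0.
  move=> tD; rewrite ffunE nth_default // memNindex ?mem_enum //.
  by rewrite size_tuple -cardE.
have graph_c : graph c = w.
  apply: val_inj => /=; under eq_map do rewrite ffunE.
  by rewrite map_nth_index ?enum_uniq // size_tuple -cardE.
exists c => //; rewrite inE /composition -(sum_supported c_out).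
rewrite -[map _ _]/(val (graph c)) graph_c wS andbT.
by apply/forallP => t; apply/implyP => /c_out ->.
Qed.
End Compositions.
Arguments composition {T} k D c.

Section IntegerCodes.
Variable S : finType.

Lemma toZ_inj N : injective (@toZ S N).
Proof.
move=> g1 g2 e; apply/ffunP => s; apply: val_inj.
by have := congr1 (fun f : {ffun S -> int} => f s) e; rewrite !ffunE => -[].
Qed.

Lemma sum_toZ N (g : {ffun S -> 'I_N.+1}) : \sum_s toZ g s = (\sum_s g s)%N%:Z.
Proof.
by rewrite (big_morph Posz PoszD (erefl _)); apply: eq_bigr => s _; rewrite ffunE.
Qed.

Lemma exists_toZ N (c : {ffun S -> int}) : (forall s, 0 <= c s <= N%:Z) ->
  exists g : {ffun S -> 'I_N.+1}, toZ g = c.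
Proof.
move=> cN; exists [ffun s => inord (absz (c s))]; apply/ffunP => s.
by have cs := cN s; rewrite !ffunE inordK; lia.
Qed.
End IntegerCodes.

Section PointsBelow.
Variables (S : finType) (r : S -> nat) (P : pred {ffun S -> int}) (k : nat) (s0 : S).
Variable B : seq {ffun S -> int}.
Hypotheses (r_inj : injective r) (P_exch : exchange_closed P).
Hypotheses (B_uniq : uniq B) (memB : forall f, (f \in B) = P f).
Implicit Types (f g x : {ffun S -> int}) (c : {ffun S -> 'I_k.+1}).

Lemma composition_active_above f c : P f -> composition k (active_set r P f) c ->
  active_above r P (f - toZ c) f.
Proof.
move=> Pf /andP[/forallP c_out _]; split=> // s; rewrite !ffunE; first by rewrite gerBl.
move=> lt_s; suff : s \in active_set r P f by rewrite inE.
by apply: contraLR lt_s => /(implyP (c_out s)) /eqP ->; rewrite subr0 ltxx.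
Qed.

Lemma enum_points_below : exists ps : seq {ffun S -> int}, [/\ uniq ps,
  forall x, x \in ps <-> exists f, [/\ P f, forall s, x s <= f s & \sum_s (f s - x s) = k%:Z] &
  size ps = (\sum_(f <- B) 'C(k + #|active_set r P f|.-1, #|active_set r P f|.-1))%N].
Proof.
pose comps f := enum [set c | composition k (active_set r P f) c].
have comps_active f c : c \in comps f -> composition k (active_set r P f) c.
  by rewrite mem_enum inE.
exists [seq f - toZ c | f <- B, c <- comps f]; split.
- apply: allpairs_uniq_dep => // [f _|]; first exact: enum_uniq.
  move=> _ _ /allpairsPdep[f1 [c1 [Bf1 cc1 ->]]] /allpairsPdep[f2 [c2 [Bf2 cc2 ->]]] /= e.
  move: Bf1 Bf2; rewrite !memB => Bf1 Bf2.
  have Af1 := composition_active_above Bf1 (comps_active _ _ cc1).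
  have Af2 := composition_active_above Bf2 (comps_active _ _ cc2).
  rewrite e in Af1; have ef := active_above_unique r_inj P_exch Af1 Af2.
  by move: e; rewrite ef => /addrI /oppr_inj /toZ_inj ->.
- move=> x; split.
    case/allpairsPdep=> f [c [Bf cc ->]]; rewrite memB in Bf.
    exists f; split=> // [s|]; first by rewrite !ffunE gerBl.
    case/andP: (comps_active _ _ cc) => _ /eqP cS.
    apply: etrans (congr1 Posz cS); rewrite -sum_toZ.
    by apply: eq_bigr => s _; rewrite !ffunE opprB addrC subrK.
  case=> f [Pf xf fxS]; have [g [Pg xg g_act] gS] := exists_active_above r Pf xf.
  have gxS : \sum_s (g - x) s = k%:Z.
    by under eq_bigr do rewrite !ffunE; rewrite sumrB gS -sumrB fxS.
  have [c ec] : exists c : {ffun S -> 'I_k.+1}, toZ c = g - x.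
    apply: exists_toZ => s; apply/andP; split; first by rewrite !ffunE subr_ge0.
    rewrite -gxS (bigD1 s) //= lerDl.
    by apply: sumr_ge0 => t _; rewrite !ffunE subr_ge0.
  apply/allpairsPdep; exists g, c; split; first by rewrite memB.
    rewrite mem_enum inE /composition -eqz_nat -sum_toZ ec gxS eqxx andbT.
    apply/forallP => s; apply/implyP => s_out; apply/eqP/val_inj => /=.
    have gxs : g s = x s.
      apply: le_anti; rewrite xg andbT leNgt.
      by apply: contra s_out => /g_act; rewrite inE.
    by have := congr1 (fun h : {ffun S -> int} => h s) ec; rewrite !ffunE gxs subrr => -[].
  by rewrite ec opprB addrC subrK.
- rewrite size_allpairs_dep sumnE big_map; apply: eq_bigr => f _.
  by rewrite -cardE card_compositions // active_set_neq0.
Qed.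
End PointsBelow.

Lemma sum_by_value (I : finType) (P : pred I) (a : I -> nat) (n : nat) (F : nat -> nat) :
  (forall i, P i -> a i < n)%N ->
  (\sum_(i | P i) F (a i) = \sum_(j < n) #|[set i | P i && (a i == j)]| * F j)%N.
Proof.
case: n => [|n] a_lt.
  by rewrite big_ord0 big_pred0 // => i; apply/negP => /a_lt.
rewrite (partition_big (fun i => inord (a i) : 'I_n.+1) xpredT) //.
apply: eq_bigr => j _; rewrite -sum_nat_const.
apply: eq_big => [i|i /andP[Pi /eqP <-]]; last by rewrite inordK ?a_lt.
by rewrite inE; case Pi: (P i); rewrite //= -(inj_eq val_inj) /= inordK ?a_lt.
Qed.

Lemma sum_binomial_by_defect (I S : finType) (P : pred I) (A : I -> {set S}) (k : nat) :
  (forall i, P i -> A i != set0) ->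
  (\sum_(i | P i) 'C(k + #|A i|.-1, #|A i|.-1) =
   \sum_(j < #|S|) #|[set i | P i && (#|S| - #|A i| == j)]| *
     'C(k + #|S|.-1 - j, #|S|.-1 - j))%N.
Proof.
move=> A0; have A_card i : P i -> (0 < #|A i| <= #|S|)%N.
  by move/A0; rewrite -card_gt0 => ->; apply: max_card.
rewrite -(@sum_by_value _ P (fun i => #|S| - #|A i|)%N _
  (fun j => 'C(k + #|S|.-1 - j, #|S|.-1 - j))) => [|i /A_card]; last by lia.
by apply: eq_bigr => i /A_card A_range; congr 'C(_, _); lia.
Qed.

Section BaseList.
Variables (S : finType) (mu : {set S} -> int).

Definition base_list : seq {ffun S -> int} :=
  [seq toZ g | g <- enum [pred g : {ffun S -> 'I_(bbound mu).+1} | is_base mu (toZ g)]].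

Lemma base_list_uniq : uniq base_list.
Proof. by rewrite map_inj_uniq ?enum_uniq //; exact: toZ_inj. Qed.

Lemma mem_base_list f : (f \in base_list) = is_base mu f.
Proof.
apply/mapP/idP => [[g] | bf]; first by rewrite mem_enum => + ->.
have /is_baseP[f0 fU _] := bf.
have [g gf] : exists g : {ffun S -> 'I_(bbound mu).+1}, toZ g = f.
  apply: exists_toZ => s; rewrite f0 /=; have := fU [set s]; rewrite big_set1.
  by have := @leq_bigmax _ (fun t => `|mu [set t]|%N) s; rewrite /bbound; lia.
by exists g; rewrite ?mem_enum ?inE gf.
Qed.

Lemma sum_base_list (W : {ffun S -> int} -> nat) :
  (\sum_(f <- base_list) W f =
   \sum_(g : {ffun S -> 'I_(bbound mu).+1} | is_base mu (toZ g)) W (toZ g))%N.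
Proof. by rewrite big_map big_enum. Qed.
End BaseList.

Section Counts.
Variables (R : realType) (S : finType) (mu : {set S} -> int) (r : S -> nat).
Hypotheses (r_inj : injective r) (mu_sub : submodular mu).
Variables (k : nat) (s0 : S).

Lemma ext_active_set f :
  [set s | ext_active r mu f s] = active_set r (fun g => is_base mu (- g)) (- f).
Proof.
apply/setP => s; rewrite !inE; congr (~~ _); apply: eq_existsb => s'.
by rewrite opp_exch opprK.
Qed.

Lemma interior_count : exists ps : seq {ffun S -> int}, uniq ps /\
  (forall x, x \in ps <-> in_mink mu (@in_Nabla S R) k x) /\
  size ps = (\sum_(j < #|S|) interior_coef r mu j * 'C(k + #|S|.-1 - j, #|S|.-1 - j))%N.
Proof.
have [ps [ps_uniq ps_mem ps_size]] := enum_points_below k s0 r_inj (base_exchange mu_sub)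
  (base_list_uniq mu) (mem_base_list mu).
exists ps; split=> //; split=> [x|].
  exact: iff_trans (ps_mem x) (iff_sym (mink_nablaP R mu_sub s0 k x)).
rewrite ps_size sum_base_list (sum_binomial_by_defect (P := fun g => is_base mu (toZ g))
  (A := fun g => active_set r (is_base mu) (toZ g))) // => g _.
exact: active_set_neq0.
Qed.

Lemma exterior_count : exists ps : seq {ffun S -> int}, uniq ps /\
  (forall x, x \in ps <-> in_mink mu (@in_Delta S R) k x) /\
  size ps = (\sum_(j < #|S|) exterior_coef r mu j * 'C(k + #|S|.-1 - j, #|S|.-1 - j))%N.
Proof.
pose B := map -%R (base_list mu).
have B_uniq : uniq B by rewrite map_inj_uniq ?base_list_uniq //; exact: oppr_inj.
have memB f : (f \in B) = is_base mu (- f).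
  by rewrite -{1}[f]opprK mem_map ?mem_base_list //; exact: oppr_inj.
have [ps [ps_uniq ps_mem ps_size]] :=
  enum_points_below k s0 r_inj (base_exchange_opp mu_sub) B_uniq memB.
exists (map -%R ps); split; first by rewrite map_inj_uniq //; exact: oppr_inj.
split=> [x|].
  rewrite -{1}[x]opprK mem_map; last exact: oppr_inj.
  apply: iff_trans (ps_mem _) (iff_trans _ (iff_sym (mink_deltaP R mu_sub s0 k x))).
  split=> -[f [bf xf fxS]]; exists (- f); rewrite ?opprK; split=> // [s|].
  - by have := xf s; rewrite !ffunE lerNl.
  - by rewrite -fxS; apply: eq_bigr => s _; rewrite !ffunE !opprK addrC.
  - by have := xf s; rewrite !ffunE lerN2.
  - by rewrite -fxS; apply: eq_bigr => s _; rewrite !ffunE !opprK addrC.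
rewrite size_map ps_size big_map sum_base_list.
under eq_bigr do rewrite -ext_active_set.
rewrite (sum_binomial_by_defect (P := fun g => is_base mu (toZ g))
  (A := fun g => [set s | ext_active r mu (toZ g) s])) // => g _.
by rewrite ext_active_set active_set_neq0.
Qed.
End Counts.

Unset Implicit Arguments.

Theorem theorem2p10 (R : realType) (S : finType) (mu : {set S} -> int)
  (r : S -> nat) (r_inj : injective r)
  (hsub : submodular mu) (hmon : mu_nondecreasing mu) (k : nat) :
  (exists ps : seq {ffun S -> int}, uniq ps /\
     (forall x, x \in ps <-> in_mink mu (@in_Nabla S R) k x) /\
     size ps = (\sum_(j < #|S|) interior_coef r mu j *
                  'C(k + #|S|.-1 - j, #|S|.-1 - j))%N) /\
  (exists ps : seq {ffun S -> int}, uniq ps /\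
     (forall x, x \in ps <-> in_mink mu (@in_Delta S R) k x) /\
     size ps = (\sum_(j < #|S|) exterior_coef r mu j *
                  'C(k + #|S|.-1 - j, #|S|.-1 - j))%N).
Proof.
case: (pickP (xpredT : pred S)) => [s0 _ | S_empty].
  split; [exact (interior_count R r_inj hsub k s0) | exact (exterior_count R r_inj hsub k s0)].
have S0 : #|S| = 0%N by apply: eq_card0.
have no_simplex_point (d : {ffun S -> R}) : ~ in_Delta d.
  by case=> _ /eqP; rewrite big1 ?(eq_sym 0) ?oner_eq0 // => s; have := S_empty s.
by split; exists [::]; rewrite S0 big_ord0; do 2!split=> //;
  move=> x; split=> // -[b [d [_ [/no_simplex_point]]]].
Qed.
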